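(* Every proper quasi-tree is $(1,C)$-quasi-isometric to a locally finite simplicial tree, for some $C\geqslant 0$.
   Context: A quasi-tree is a geodesic metric space quasi-isometric to a simplicial tree; proper means closed balls are compact. A simplicial tree is a 1-dimensional simplicial complex which is an $\mathbb{R}$-tree for the path metric with unit edges; locally finite means each vertex has finitely many neighbours. A $(1,C)$-quasi-isometry $f$ satisfies $d(a,b)-C\leqslant d(f(a),f(b))\leqslant d(a,b)+C$ and has $C$-dense image. *)

From Stdlib Require Import Reals Lra List ClassicalEpsilon.
Import ListNotations.
Open Scope R_scope.
Set Implicit Arguments.

Definition is_metric (X : Type) (d : X -> X -> R) : Prop :=
  (forall x y, 0 <= d x y) /\
  (forall x y, d x y = 0 <-> x = y) /\
  (forall x y, d x y = d y x) /\
  (forall x y z, d x z <= d x y + d y z).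

Definition open_set (X : Type) (d : X -> X -> R) (U : X -> Prop) : Prop :=
  forall x, U x -> exists r, 0 < r /\ forall y, d x y < r -> U y.

Definition compact_set (X : Type) (d : X -> X -> R) (K : X -> Prop) : Prop :=
  forall (I : Type) (U : I -> X -> Prop),
    (forall i, open_set d (U i)) ->
    (forall x, K x -> exists i, U i x) ->
    exists l : list I, forall x, K x -> exists i, In i l /\ U i x.

Definition closed_ball (X : Type) (d : X -> X -> R) (x : X) (r : R) : X -> Prop :=
  fun y => d x y <= r.

Definition proper (X : Type) (d : X -> X -> R) : Prop :=
  forall x r, compact_set d (closed_ball d x r).

Definition geodesic (X : Type) (d : X -> X -> R) : Prop :=
  forall x y, exists g : R -> X,
    g 0 = x /\ g (d x y) = y /\
    forall s t, 0 <= s <= d x y -> 0 <= t <= d x y ->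
      d (g s) (g t) = Rabs (s - t).

Definition quasi_isometry (X Y : Type) (dX : X -> X -> R) (dY : Y -> Y -> R)
  (K C : R) (f : X -> Y) : Prop :=
  (forall a b, (1 / K) * dX a b - C <= dY (f a) (f b) <= K * dX a b + C) /\
  (forall y, exists x, dY (f x) y <= C).

Definition one_C_quasi_isometry (X Y : Type) (dX : X -> X -> R) (dY : Y -> Y -> R)
  (C : R) (f : X -> Y) : Prop :=
  (forall a b, dX a b - C <= dY (f a) (f b) <= dX a b + C) /\
  (forall y, exists x, dY (f x) y <= C).

(* A 1-dimensional simplicial complex: vertex type V, edge type E, each edge
   given with an (arbitrary) orientation src/tgt. *)

Section Graph.
Variables (V E : Type) (src tgt : E -> V).

Definition adj (u v : V) : Prop :=
  exists e, (src e = u /\ tgt e = v) \/ (src e = v /\ tgt e = u).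

Definition simplicial : Prop :=
  (forall e, src e <> tgt e) /\
  (forall e e', (src e = src e' /\ tgt e = tgt e') \/
                (src e = tgt e' /\ tgt e = src e') -> e = e').

Inductive walk : V -> V -> nat -> Prop :=
  | walk_nil v : walk v v 0
  | walk_cons u v w n : adj u v -> walk v w n -> walk u w (S n).

Definition connected : Prop := forall u v, exists n, walk u v n.

Fixpoint chain (l : list V) : Prop :=
  match l with
  | x :: ((y :: _) as t) => adj x y /\ chain t
  | _ => True
  end.

Definition simple_path (u v : V) (l : list V) : Prop :=
  hd_error l = Some u /\ last l u = v /\ NoDup l /\ chain l.

Definition simplicial_tree : Prop :=
  simplicial /\ connected /\
  forall u v l1 l2, simple_path u v l1 -> simple_path u v l2 -> l1 = l2.

Definition locally_finite : Prop :=
  forall v, exists l : list V, forall u, adj v u -> In u l.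

(* combinatorial distance: least length of a walk (0 if none) *)
Definition graph_dist (u v : V) : R :=
  INR (epsilon (inhabits 0%nat)
         (fun n => walk u v n /\ forall m, walk u v m -> (n <= m)%nat)).

(* Points of the geometric realisation: vertices, and interior points of
   edges (PE e t is the point at distance t from src e, 0 < t < 1). *)
Inductive prepoint : Type :=
  | PV : V -> prepoint
  | PE : E -> R -> prepoint.

Definition valid_point (p : prepoint) : Prop :=
  match p with PV _ => True | PE _ t => 0 < t < 1 end.

Definition tpoint : Type := { p : prepoint | valid_point p }.

(* endpoints of the closed cell containing p, with distance to them *)
Definition ends (p : prepoint) : list (V * R) :=
  match p with
  | PV v => [(v, 0)]
  | PE e t => [(src e, t); (tgt e, 1 - t)]
  end.

Definition list_min (l : list R) : R :=
  match l with nil => 0 | x :: l' => fold_left Rmin l' x end.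

(* Path metric (unit edge lengths) of the realisation of a tree: distance
   within a common edge, otherwise shortest route through endpoints. *)
Definition pre_tdist (p q : prepoint) : R :=
  match p, q with
  | PE e s, PE e' t =>
      if excluded_middle_informative (e = e') then Rabs (s - t)
      else list_min (flat_map (fun a => map (fun b => snd a + graph_dist (fst a) (fst b) + snd b) (ends q)) (ends p))
  | _, _ =>
      list_min (flat_map (fun a => map (fun b => snd a + graph_dist (fst a) (fst b) + snd b) (ends q)) (ends p))
  end.

Definition tdist (p q : tpoint) : R := pre_tdist (proj1_sig p) (proj1_sig q).

End Graph.

Definition quasi_tree (X : Type) (d : X -> X -> R) : Prop :=
  is_metric d /\ geodesic d /\
  exists (V E : Type) (src tgt : E -> V),
    @simplicial_tree V E src tgt /\
    exists (K C : R) (f : X -> tpoint V E),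
      1 <= K /\ 0 <= C /\ quasi_isometry d (@tdist V E src tgt) K C f.

(* A geodesic quasi-tree has Manning's bottleneck property: every 1-chain from x to y passes
   uniformly close to each point of a geodesic from x to y.  This is read off from the tree,
   in which every path between two vertices runs through all vertices of the geodesic joining
   them.  Fix a base point o and slice the space into the levels k <= d(o, x) < k + 1.  The
   vertices of the new tree are the pieces of the levels, two points of level k lying in the
   same piece when a 1-chain of points at height at least k joins them; the parent of a piece
   is the piece one level lower on a geodesic towards o.  The tree distance between the pieces
   of x and y is d(x, y) up to an additive constant: from above by following a geodesic from x
   to y, which stays at height at least the Gromov product (x|y)_o, and from below by the
   bottleneck property.  Properness leaves each piece with finitely many children. *)

From Stdlib Require Import Reals Lra Lia ZArith List.
From Stdlib Require Import ClassicalEpsilon FunctionalExtensionality PropExtensionality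
  ProofIrrelevance.
Import ListNotations.
Open Scope R_scope.
Set Implicit Arguments.
Unset Strict Implicit.

Section Walks.
Variables (V E : Type) (src tgt : E -> V).
Notation adj := (adj src tgt).
Notation walk := (walk src tgt).

Lemma adj_sym u v : adj u v -> adj v u.
Proof. intros [e [[H1 H2]|[H1 H2]]]; exists e; tauto. Qed.

Lemma walk_rcons u v w n : walk u v n -> adj v w -> walk u w (S n).
Proof.
  induction 1; intros Hvw.
  - apply walk_cons with w; [exact Hvw | constructor].
  - apply walk_cons with v; auto.
Qed.

Lemma walk_app u v w n m : walk u v n -> walk v w m -> walk u w (n + m).
Proof. induction 1; intros Hvw; simpl; [exact Hvw | apply walk_cons with v; auto]. Qed.

Lemma walk_sym u v n : walk u v n -> walk v u n.
Proof.
  induction 1; [constructor|].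
  apply walk_rcons with v; [assumption | apply adj_sym; assumption].
Qed.

Inductive vpath : V -> V -> list V -> Prop :=
| vpath_one v : vpath v v [v]
| vpath_cons u v w l : adj u v -> vpath v w l -> vpath u w (u :: l).

Lemma walk_vpath u v n : walk u v n -> exists l, vpath u v l /\ length l = S n.
Proof.
  induction 1 as [v|u v w n Huv _ [l [Hl Hlen]]].
  - exists [v]; split; [constructor | reflexivity].
  - exists (u :: l); split; [apply vpath_cons with v; assumption | simpl; lia].
Qed.

Lemma vpath_walk u v l : vpath u v l -> walk u v (pred (length l)).
Proof.
  induction 1 as [v|u v w l Huv Hl IH]; [constructor|].
  assert (Hlen : length l = S (pred (length l))) by (destruct Hl; simpl; lia).
  simpl; rewrite Hlen; apply walk_cons with v; assumption.
Qed.

Lemma vpath_head_in u v l : vpath u v l -> In u l.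
Proof. destruct 1; simpl; auto. Qed.

Lemma vpath_last_in u v l : vpath u v l -> In v l.
Proof. induction 1; simpl; auto. Qed.

Lemma vpath_app u v w l1 l2 : vpath u v l1 -> vpath v w l2 ->
  exists l, vpath u w l /\ incl l (l1 ++ l2).
Proof.
  induction 1 as [v|u v' v l1 Huv' _ IH]; intros H2.
  - exists l2; split; [assumption | intros x Hx; apply in_or_app; right; assumption].
  - destruct (IH H2) as [l [Hl Hincl]].
    exists (u :: l); split; [apply vpath_cons with v'; assumption|].
    intros x [<-|Hx]; [left; reflexivity | right; apply Hincl; assumption].
Qed.

Lemma vpath_prefix u v l x : vpath u v l -> In x l ->
  exists l', vpath u x l' /\ (length l' <= length l)%nat.
Proof.
  induction 1 as [v|u v w l Huv Hl IH]; intros Hx.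
  - destruct Hx as [<-|[]]. exists [v]; split; [constructor | auto].
  - destruct Hx as [<-|Hx].
    + exists [u]; split; [constructor | simpl; lia].
    + destruct (IH Hx) as [l' [Hl' Hlen]].
      exists (u :: l'); split; [apply vpath_cons with v; assumption | simpl; lia].
Qed.

Lemma vpath_suffix u v l x : vpath u v l -> In x l ->
  exists l', vpath x v l' /\ (length l' <= length l)%nat /\ incl l' l.
Proof.
  induction 1 as [v|u v w l Huv Hl IH]; intros Hx.
  - destruct Hx as [<-|[]]. exists [v]; split; [constructor | split; [auto | apply incl_refl]].
  - destruct Hx as [<-|Hx].
    + exists (u :: l); split; [apply vpath_cons with v; assumption|].
      split; [auto | apply incl_refl].
    + destruct (IH Hx) as [l' [Hl' [Hlen Hincl]]].
      exists l'; split; [assumption | split; [simpl; lia | apply incl_tl; assumption]].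
Qed.

Lemma last_default_irrel (l : list V) x y : l <> [] -> last l x = last l y.
Proof.
  induction l as [|a [|b l] IH]; intros Hl; [congruence | reflexivity |].
  apply IH; discriminate.
Qed.

Lemma vpath_iff u v l :
  vpath u v l <-> hd_error l = Some u /\ last l u = v /\ chain src tgt l.
Proof.
  split.
  - induction 1 as [v|u v w l Huv Hl [Hhd [Hlast Hch]]]; [simpl; auto|].
    destruct l as [|b l]; [discriminate|]. injection Hhd as <-.
    split; [reflexivity | split; [|simpl; split; assumption]].
    rewrite <- Hlast. change (last (b :: l) u = last (b :: l) b).
    apply last_default_irrel. discriminate.
  - revert u. induction l as [|a [|b l] IH]; intros u [Hhd [Hlast Hch]]; [discriminate | |].
    + injection Hhd as ->. simpl in Hlast. subst. constructor.
    + injection Hhd as ->. destruct Hch as [Hab Hch].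
      apply vpath_cons with b; [assumption|]. apply IH. split; [reflexivity | split; [|assumption]].
      rewrite <- Hlast. change (last (b :: l) b = last (b :: l) u).
      apply last_default_irrel. discriminate.
Qed.

Definition gdist (u v : V) : nat :=
  epsilon (inhabits 0%nat) (fun n => walk u v n /\ forall m, walk u v m -> (n <= m)%nat).

Lemma graph_dist_gdist u v : graph_dist src tgt u v = INR (gdist u v).
Proof. reflexivity. Qed.

Hypothesis Hcon : connected src tgt.

Lemma gdist_spec u v : walk u v (gdist u v) /\ forall m, walk u v m -> (gdist u v <= m)%nat.
Proof.
  unfold gdist; apply epsilon_spec.
  destruct (dec_inh_nat_subset_has_unique_least_element (walk u v)
              (fun n => classic (walk u v n)) (Hcon u v)) as [n [Hn _]].
  exists n; exact Hn.
Qed.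

Lemma gdist_walk u v : walk u v (gdist u v).
Proof. apply gdist_spec. Qed.

Lemma gdist_min u v m : walk u v m -> (gdist u v <= m)%nat.
Proof. apply gdist_spec. Qed.

Lemma gdist_refl u : gdist u u = 0%nat.
Proof. pose proof (gdist_min (walk_nil src tgt u)). lia. Qed.

Lemma gdist_sym u v : gdist u v = gdist v u.
Proof. apply Nat.le_antisymm; apply gdist_min, walk_sym, gdist_walk. Qed.

Lemma gdist_triangle u v w : (gdist u w <= gdist u v + gdist v w)%nat.
Proof. apply gdist_min. apply walk_app with v; apply gdist_walk. Qed.

Lemma gdist_adj u v : adj u v -> (gdist u v <= 1)%nat.
Proof. intros Huv. apply gdist_min. apply walk_cons with v; [assumption | constructor]. Qed.

Lemma gdist_vpath u v l : vpath u v l -> (S (gdist u v) <= length l)%nat.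
Proof. intros Hl. pose proof (gdist_min (vpath_walk Hl)). destruct Hl; simpl in *; lia. Qed.

Lemma shortest_vpath u v : exists l, vpath u v l /\ length l = S (gdist u v).
Proof. apply walk_vpath, gdist_walk. Qed.

Lemma vpath_crossing (A B : V -> Prop) a b l : vpath a b l ->
  (forall x, In x l -> A x \/ B x) -> A a -> B b ->
  exists q q', In q l /\ In q' l /\ A q /\ B q' /\ (gdist q q' <= 1)%nat.
Proof.
  induction 1 as [v|u v w l Huv Hl IH]; intros HAB Ha Hb.
  - exists v, v. rewrite gdist_refl. simpl; intuition.
  - destruct (classic (B u)) as [Hbu|Hbu].
    + exists u, u. rewrite gdist_refl. simpl; intuition.
    + destruct (HAB v (or_intror (vpath_head_in Hl))) as [Hav|Hbv].
      * destruct (IH (fun x Hx => HAB x (or_intror Hx)) Hav Hb)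
          as [q [q' [Hq [Hq' [Haq [Hbq' Hqq']]]]]].
        exists q, q'; simpl; intuition.
      * exists u, v. pose proof (vpath_head_in Hl). pose proof (gdist_adj Huv).
        simpl; intuition.
Qed.

End Walks.

Section Trees.
Variables (V E : Type) (src tgt : E -> V).
Hypothesis Htree : simplicial_tree src tgt.
Notation vpath := (vpath src tgt).
Notation gdist := (gdist src tgt).

Lemma tree_connected : connected src tgt.
Proof. apply Htree. Qed.

Lemma vpath_shortcut a b l : vpath a b l -> ~ NoDup l ->
  exists l', vpath a b l' /\ (length l' < length l)%nat /\ incl l' l.
Proof.
  induction 1 as [v|u v w l Huv Hl IH]; intros Hdup.
  - exfalso; apply Hdup. repeat constructor; auto.
  - destruct (classic (In u l)) as [Hin|Hnin].
    + destruct (vpath_suffix Hl Hin) as [l' [Hl' [Hlen Hincl]]].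
      exists l'; split; [assumption | split; [simpl; lia | apply incl_tl; assumption]].
    + destruct IH as [l' [Hl' [Hlen Hincl]]]; [intros Hnd; apply Hdup; constructor; assumption|].
      exists (u :: l'); split; [apply vpath_cons with v; assumption|].
      split; [simpl; lia | apply incl_cons; [left; reflexivity | apply incl_tl; assumption]].
Qed.

Lemma vpath_nodup_incl a b l : vpath a b l ->
  exists l', vpath a b l' /\ NoDup l' /\ incl l' l.
Proof.
  remember (length l) as n eqn:Hn. revert l Hn.
  induction n as [n IH] using lt_wf_ind; intros l Hn Hl.
  destruct (classic (NoDup l)) as [Hnd|Hdup].
  - exists l; split; [assumption | split; [assumption | apply incl_refl]].
  - destruct (vpath_shortcut Hl Hdup) as [l1 [Hl1 [Hlen Hincl]]].
    destruct (IH (length l1) ltac:(lia) l1 eq_refl Hl1) as [l' [Hl' [Hnd Hincl']]].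
    exists l'; split; [assumption | split; [assumption | apply (incl_tran Hincl' Hincl)]].
Qed.

Lemma shortest_vpath_nodup a b l : vpath a b l -> length l = S (gdist a b) -> NoDup l.
Proof.
  intros Hl Hlen. apply NNPP; intros Hdup.
  destruct (vpath_shortcut Hl Hdup) as [l' [Hl' [Hlt _]]].
  pose proof (gdist_vpath tree_connected Hl'). lia.
Qed.

Lemma shortest_vpath_incl a b W L : vpath a b W ->
  vpath a b L -> length L = S (gdist a b) -> incl L W.
Proof.
  intros HW HL Hlen.
  destruct (vpath_nodup_incl HW) as [l [Hl [Hnd Hincl]]].
  replace L with l; [assumption|].
  destruct Htree as [_ [_ Huniq]].
  apply (Huniq a b).
  - apply vpath_iff in Hl as [? [? ?]]. repeat split; assumption.
  - pose proof (shortest_vpath_nodup HL Hlen).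
    apply vpath_iff in HL as [? [? ?]]. repeat split; assumption.
Qed.

Inductive vchain (Q : V -> Prop) (J : nat) : V -> V -> Prop :=
| vchain_one v : Q v -> vchain Q J v v
| vchain_cons u v w : Q u -> (gdist u v <= J)%nat -> vchain Q J v w -> vchain Q J u w.

Lemma vchain_vpath Q J a b : vchain Q J a b ->
  exists W, vpath a b W /\ forall x, In x W -> exists v, Q v /\ (gdist v x <= J)%nat.
Proof.
  induction 1 as [v Hv|u v w Hu Huv _ [W [HW HWnear]]].
  - exists [v]; split; [constructor|]. intros x [<-|[]].
    exists v; split; [assumption | rewrite (gdist_refl tree_connected); lia].
  - destruct (shortest_vpath tree_connected u v) as [l [Hl Hlen]].
    destruct (vpath_app Hl HW) as [W' [HW' Hincl]].
    exists W'; split; [assumption|]. intros x Hx.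
    destruct (in_app_or _ _ _ (Hincl x Hx)) as [Hxl|HxW]; [|auto].
    exists u; split; [assumption|].
    destruct (vpath_prefix Hl Hxl) as [l' [Hl' Hlen']].
    pose proof (gdist_vpath tree_connected Hl'). lia.
Qed.

Lemma shortest_vpath_near_vchain Q J a b L q : vchain Q J a b ->
  vpath a b L -> length L = S (gdist a b) -> In q L ->
  exists v, Q v /\ (gdist v q <= J)%nat.
Proof.
  intros Hch HL Hlen Hq. destruct (vchain_vpath Hch) as [W [HW HWnear]].
  apply HWnear, (shortest_vpath_incl HW HL Hlen Hq).
Qed.

End Trees.

Lemma fold_left_Rmin_le (l : list R) x y : In y (x :: l) -> fold_left Rmin l x <= y.
Proof.
  revert x y; induction l as [|z l IH]; intros x y Hy; simpl in *.
  - destruct Hy as [<-|[]]; lra.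
  - destruct Hy as [<-|[<-|Hy]].
    + eapply Rle_trans; [apply IH; left; reflexivity | apply Rmin_l].
    + eapply Rle_trans; [apply IH; left; reflexivity | apply Rmin_r].
    + apply IH; right; assumption.
Qed.

Lemma fold_left_Rmin_ge (l : list R) x m :
  (forall y, In y (x :: l) -> m <= y) -> m <= fold_left Rmin l x.
Proof.
  revert x; induction l as [|z l IH]; intros x Hm; simpl; [apply Hm; left; reflexivity|].
  apply IH. intros y [<-|Hy]; [|apply Hm; simpl; auto].
  apply Rmin_glb; apply Hm; simpl; auto.
Qed.

Lemma list_min_le (l : list R) y : In y l -> list_min l <= y.
Proof. destruct l as [|x l]; [intros []|apply fold_left_Rmin_le]. Qed.

Lemma list_min_ge (l : list R) m : l <> [] -> (forall y, In y l -> m <= y) -> m <= list_min l.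
Proof. destruct l as [|x l]; [congruence|intros _; apply fold_left_Rmin_ge]. Qed.

Section Realisation.
Variables (V E : Type) (src tgt : E -> V).
Hypothesis Hcon : connected src tgt.
Notation gdist := (gdist src tgt).
Notation ends := (ends src tgt).

Definition routes (p q : prepoint V E) : list R :=
  flat_map (fun a => map (fun b => snd a + graph_dist src tgt (fst a) (fst b) + snd b) (ends q))
    (ends p).

Lemma pre_tdist_cases p q :
  pre_tdist src tgt p q = list_min (routes p q) \/
  exists e s t, p = PE V e s /\ q = PE V e t /\ pre_tdist src tgt p q = Rabs (s - t).
Proof.
  destruct p as [u|e s], q as [v|e' t]; simpl; auto.
  destruct (excluded_middle_informative (e = e')) as [<-|]; [right; exists e, s, t|left]; auto.
Qed.

Lemma in_routes p q a b : In a (ends p) -> In b (ends q) ->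
  In (snd a + INR (gdist (fst a) (fst b)) + snd b) (routes p q).
Proof.
  intros Ha Hb. apply in_flat_map. exists a; split; [assumption|].
  apply in_map_iff. exists b; split; [reflexivity | assumption].
Qed.

Lemma routes_inv p q y : In y (routes p q) ->
  exists a b, In a (ends p) /\ In b (ends q) /\ y = snd a + INR (gdist (fst a) (fst b)) + snd b.
Proof.
  intros Hy. apply in_flat_map in Hy as [a [Ha Hy]]. apply in_map_iff in Hy as [b [<- Hb]].
  exists a, b; auto.
Qed.

Lemma routes_nonempty p q : routes p q <> [].
Proof. destruct p, q; discriminate. Qed.

Definition round_point (p : tpoint V E) : V :=
  match proj1_sig p with PV _ v => v | PE _ e _ => src e end.

Lemma round_point_ends p : exists t, 0 <= t <= 1 /\ In (round_point p, t) (ends (proj1_sig p)).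
Proof.
  destruct p as [[v|e t] Hp]; unfold round_point; simpl in *.
  - exists 0; split; [lra | left; reflexivity].
  - exists t; split; [lra | left; reflexivity].
Qed.

Lemma ends_near_round_point p a : In a (ends (proj1_sig p)) ->
  0 <= snd a <= 1 /\ (gdist (round_point p) (fst a) <= 1)%nat.
Proof.
  assert (Hsrc_tgt : forall e, (gdist (src e) (tgt e) <= 1)%nat)
    by (intros e; apply (gdist_adj Hcon); exists e; left; split; reflexivity).
  destruct p as [[v|e t] Hp]; unfold round_point; simpl in *.
  - intros [<-|[]]. simpl. rewrite (gdist_refl Hcon). split; [lra | lia].
  - intros [<-|[<-|[]]]; simpl; [rewrite (gdist_refl Hcon)|]; split; auto; lra.
Qed.

Lemma tdist_round_point p q :
  tdist src tgt p q <= INR (gdist (round_point p) (round_point q)) + 2 /\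
  INR (gdist (round_point p) (round_point q)) <= tdist src tgt p q + 2.
Proof.
  unfold tdist.
  destruct (pre_tdist_cases (proj1_sig p) (proj1_sig q)) as [->|[e [s [t [Hp [Hq ->]]]]]].
  - split.
    + destruct (round_point_ends p) as [tp [Htp Hinp]], (round_point_ends q) as [tq [Htq Hinq]].
      eapply Rle_trans; [apply list_min_le, (in_routes Hinp Hinq)|]. simpl; lra.
    + enough (INR (gdist (round_point p) (round_point q)) - 2
                <= list_min (routes (proj1_sig p) (proj1_sig q))) by lra.
      apply list_min_ge; [apply routes_nonempty|]. intros y Hy.
      destruct (routes_inv Hy) as [a [b [Ha [Hb ->]]]].
      destruct (ends_near_round_point Ha) as [Hsa Hda], (ends_near_round_point Hb) as [Hsb Hdb].
      assert (Hle : (gdist (round_point p) (round_point q) <= gdist (fst a) (fst b) + 2)%nat).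
      { pose proof (gdist_triangle Hcon (round_point p) (fst a) (round_point q)).
        pose proof (gdist_triangle Hcon (fst a) (fst b) (round_point q)).
        rewrite (gdist_sym Hcon (fst b)) in *. lia. }
      apply le_INR in Hle. rewrite plus_INR in Hle. simpl in Hle. lra.
  - destruct p as [p Hvp], q as [q Hvq]; simpl in *; subst; unfold round_point; simpl in *.
    rewrite (gdist_refl Hcon). simpl.
    split; unfold Rabs; destruct (Rcase_abs (s - t)); lra.
Qed.

End Realisation.

Definition floor_nat (r : R) : nat := Z.to_nat (Int_part r).

Lemma floor_nat_spec r : 0 <= r -> INR (floor_nat r) <= r < INR (floor_nat r) + 1.
Proof.
  intros Hr. destruct (base_Int_part r) as [Hle Hgt].
  assert (Hnn : (0 <= Int_part r)%Z) by (cut (-1 < Int_part r)%Z; [lia | apply lt_IZR; lra]).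
  unfold floor_nat. rewrite INR_IZR_INZ, Z2Nat.id by assumption. lra.
Qed.

Lemma floor_nat_INR n : floor_nat (INR n) = n.
Proof. unfold floor_nat. rewrite Int_part_INR. apply Nat2Z.id. Qed.

Lemma floor_nat_ge r k : INR k <= r -> (k <= floor_nat r)%nat.
Proof.
  intros Hk. assert (Hr : 0 <= r) by (pose proof (pos_INR k); lra).
  destruct (floor_nat_spec Hr) as [_ Hlt]. rewrite <- S_INR in Hlt.
  assert (Hk' : (k < S (floor_nat r))%nat) by (apply INR_lt; lra). lia.
Qed.

Lemma lt_INR_floor_nat_succ r : r < INR (S (floor_nat r)).
Proof.
  destruct (Rle_or_lt 0 r) as [Hr|Hr].
  - rewrite S_INR. apply floor_nat_spec, Hr.
  - pose proof (pos_INR (S (floor_nat r))). lra.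
Qed.

Section Metric.
Variables (X : Type) (d : X -> X -> R).
Hypothesis Hm : is_metric d.

Lemma d_nonneg x y : 0 <= d x y.
Proof. apply Hm. Qed.

Lemma d_sym x y : d x y = d y x.
Proof. apply Hm. Qed.

Lemma d_triangle x y z : d x z <= d x y + d y z.
Proof. apply Hm. Qed.

Lemma d_refl x : d x x = 0.
Proof. apply Hm. reflexivity. Qed.

Inductive chained (P : X -> Prop) : X -> X -> Prop :=
| chained_one x : P x -> chained P x x
| chained_cons x y z : P x -> d x y <= 1 -> chained P y z -> chained P x z.

Lemma chained_trans P x y z : chained P x y -> chained P y z -> chained P x z.
Proof. induction 1; intros Hyz; [assumption | apply chained_cons with y; auto]. Qed.

Lemma chained_rcons P x y z : chained P x y -> d y z <= 1 -> P z -> chained P x z.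
Proof.
  induction 1; intros Hyz Hz.
  - apply chained_cons with z; [assumption | assumption | constructor; assumption].
  - apply chained_cons with y; auto.
Qed.

Lemma chained_sym P x y : chained P x y -> chained P y x.
Proof.
  induction 1; [constructor; assumption|].
  apply chained_rcons with y; [assumption | rewrite d_sym; assumption | assumption].
Qed.

Lemma chained_mono (P Q : X -> Prop) x y : (forall z, P z -> Q z) -> chained P x y -> chained Q x y.
Proof. intros HPQ; induction 1; [constructor | apply chained_cons with y]; auto. Qed.

Lemma chained_close P x y : P x -> P y -> d x y <= 1 -> chained P x y.
Proof.
  intros Hx Hy Hxy. apply chained_cons with y; [assumption | assumption | constructor; assumption].
Qed.

Definition geodesic_segment (g : R -> X) (x y : X) : Prop :=
  g 0 = x /\ g (d x y) = y /\
  forall s t, 0 <= s <= d x y -> 0 <= t <= d x y -> d (g s) (g t) = Rabs (s - t).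

Lemma geodesic_segment_dist g x y s : geodesic_segment g x y -> 0 <= s <= d x y ->
  d x (g s) = s /\ d (g s) y = d x y - s.
Proof.
  intros [Hg0 [Hg1 Hgd]] Hs. rewrite <- Hg0 at 1. rewrite <- Hg1 at 1.
  rewrite (Hgd 0 s), (Hgd s (d x y)) by lra. split; unfold Rabs; destruct (Rcase_abs _); lra.
Qed.

Lemma chained_geodesic_segment (P : X -> Prop) g x y s t : geodesic_segment g x y ->
  0 <= s -> s <= t -> t <= d x y ->
  (forall u, s <= u <= t -> P (g u)) -> chained P (g s) (g t).
Proof.
  intros [_ [_ Hgd]] Hs Hst Ht HP.
  remember (floor_nat (t - s)) as n eqn:Hn.
  assert (Hlen : t - s < INR (S n)) by (subst; apply lt_INR_floor_nat_succ). clear Hn.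
  revert s Hs Hst Hlen HP. induction n as [|n IH]; intros s Hs Hst Hlen HP.
  - apply chained_close; [apply HP; lra | apply HP; lra|].
    rewrite Hgd by lra. simpl in Hlen. unfold Rabs; destruct (Rcase_abs _); lra.
  - destruct (Rle_dec (t - s) 1) as [Hle|Hgt].
    + apply chained_close; [apply HP; lra | apply HP; lra|].
      rewrite Hgd by lra. unfold Rabs; destruct (Rcase_abs _); lra.
    + apply chained_cons with (g (s + 1)); [apply HP; lra | |].
      * rewrite Hgd by lra. unfold Rabs; destruct (Rcase_abs _); lra.
      * apply IH; try lra; [rewrite S_INR in Hlen; lra | intros u Hu; apply HP; lra].
Qed.

Lemma chained_along_segment (P : X -> Prop) g x y : geodesic_segment g x y ->
  (forall s, 0 <= s <= d x y -> P (g s)) -> chained P x y.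
Proof.
  intros Hg HP. pose proof (d_nonneg x y) as Hxy.
  assert (Hch := chained_geodesic_segment (P := P) Hg (Rle_refl 0) Hxy (Rle_refl _)).
  destruct Hg as [Hg0 [Hg1 _]]. rewrite Hg0, Hg1 in Hch.
  apply Hch. intros u Hu. apply HP. lra.
Qed.

Lemma proper_half_net : proper d -> forall x r, exists l, forall y, d x y <= r ->
  exists z, In z l /\ d z y < / 2.
Proof.
  intros Hproper x r.
  destruct (Hproper x r X (fun z y => d z y < / 2)) as [l Hl].
  - intros z y Hzy. exists (/ 2 - d z y); split; [lra|].
    intros w Hyw. pose proof (d_triangle z y w). lra.
  - intros y _. exists y. rewrite d_refl. lra.
  - exists l. exact Hl.
Qed.

End Metric.

Definition bottleneck (X : Type) (d : X -> X -> R) (D : R) : Prop :=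
  forall x y g t0 P, geodesic_segment d g x y -> 0 <= t0 <= d x y -> chained d P x y ->
    exists c, P c /\ d c (g t0) <= D.

Section CoarseEmbedding.
Variables (X : Type) (d : X -> X -> R) (V E : Type) (src tgt : E -> V).
Hypothesis Hm : is_metric d.
Hypothesis Htree : simplicial_tree src tgt.
Variables (phi : X -> V) (K C : R).
Hypothesis HK : 0 <= K.
Hypothesis Hupper : forall a b, INR (gdist src tgt (phi a) (phi b)) <= K * d a b + C.
Hypothesis Hlower : forall a b, d a b <= K * (INR (gdist src tgt (phi a) (phi b)) + C).
Notation gdist := (gdist src tgt).

Let J := floor_nat (K + C).

Lemma gdist_step_le a b : d a b <= 1 -> (gdist (phi a) (phi b) <= J)%nat.
Proof.
  intros Hab. apply floor_nat_ge.
  pose proof (Hupper a b). pose proof (Rmult_le_compat_l K _ _ HK Hab). lra.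
Qed.

Lemma chained_vchain P x y :
  chained d P x y -> vchain src tgt (fun v => exists c, P c /\ v = phi c) J (phi x) (phi y).
Proof.
  induction 1 as [x Hx|x y z Hx Hxy _ IH]; [constructor; eauto|].
  apply vchain_cons with (phi y); [eauto | apply gdist_step_le; assumption | assumption].
Qed.

Lemma shortest_vpath_near_chained P x y L q : chained d P x y ->
  vpath src tgt (phi x) (phi y) L -> length L = S (gdist (phi x) (phi y)) -> In q L ->
  exists c, P c /\ (gdist (phi c) q <= J)%nat.
Proof.
  intros Hch HL Hlen Hq.
  destruct (shortest_vpath_near_vchain Htree (chained_vchain Hch) HL Hlen Hq)
    as [v [[c [Hc ->]] Hv]].
  eauto.
Qed.

Lemma dist_le_of_gdist a b n : (gdist (phi a) (phi b) <= n)%nat -> d a b <= K * (INR n + C).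
Proof.
  intros Hn. apply le_INR in Hn. eapply Rle_trans; [apply Hlower|].
  apply Rmult_le_compat_l; lra.
Qed.

Lemma bottleneck_of_coarse_embedding :
  bottleneck d (K * (INR (2 * J) + C) + K * (INR (2 * J + 1) + C)).
Proof.
  intros x y g t0 P Hg Ht0 HP.
  pose proof (tree_connected Htree) as Hcon.
  destruct (shortest_vpath Hcon (phi x) (phi y)) as [L [HL Hlen]].
  set (A := fun q => exists s, 0 <= s <= t0 /\ (gdist (phi (g s)) q <= J)%nat).
  set (B := fun q => exists s, t0 <= s <= d x y /\ (gdist (phi (g s)) q <= J)%nat).
  assert (HAB : forall q, In q L -> A q \/ B q).
  { intros q Hq.
    assert (Hseg : chained d (fun z => exists s, 0 <= s <= d x y /\ z = g s) x y)
      by (apply (chained_along_segment Hm Hg); intros s Hs; exists s; auto).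
    destruct (shortest_vpath_near_chained Hseg HL Hlen Hq)
      as [c [[s [Hs ->]] Hcq]].
    destruct (Rle_dec s t0); [left|right]; exists s; split; auto; lra. }
  destruct Hg as [Hg0 [Hg1 Hgd]].
  assert (HA : A (phi x)) by (exists 0; rewrite Hg0, (gdist_refl Hcon); split; [lra | lia]).
  assert (HB : B (phi y)).
  { exists (d x y); rewrite Hg1, (gdist_refl Hcon); split; [lra | lia]. }
  (* Walking along the tree geodesic from phi x to phi y we pass from vertices near the first
     part of the segment to vertices near its second part; near the crossing point lie both
     g t0 and, since the chain P also has to pass there, some point of P. *)
  destruct (vpath_crossing Hcon HL HAB HA HB)
    as [q [q' [Hq [_ [[s1 [Hs1 Hd1]] [[s2 [Hs2 Hd2]] Hqq']]]]]].
  destruct (shortest_vpath_near_chained HP HL Hlen Hq) as [c [Hc Hcq]].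
  exists c; split; [assumption|].
  assert (Hs12 : Rabs (s1 - s2) <= K * (INR (2 * J + 1) + C)).
  { rewrite <- Hgd by lra. apply dist_le_of_gdist.
    pose proof (gdist_triangle Hcon (phi (g s1)) q (phi (g s2))).
    pose proof (gdist_triangle Hcon q q' (phi (g s2))).
    rewrite (gdist_sym Hcon q' (phi (g s2))) in *. lia. }
  assert (Hcs1 : d c (g s1) <= K * (INR (2 * J) + C)).
  { apply dist_le_of_gdist.
    pose proof (gdist_triangle Hcon (phi c) q (phi (g s1))).
    rewrite (gdist_sym Hcon q (phi (g s1))) in *. lia. }
  pose proof (d_triangle Hm c (g s1) (g t0)) as Htri. rewrite (Hgd s1 t0) in Htri by lra.
  unfold Rabs in *; destruct (Rcase_abs (s1 - s2)); destruct (Rcase_abs (s1 - t0)); lra.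
Qed.

End CoarseEmbedding.

Lemma quasi_tree_bottleneck (X : Type) (d : X -> X -> R) :
  quasi_tree d -> exists D, 0 <= D /\ bottleneck d D.
Proof.
  intros [Hm [_ [V [E [src [tgt [Htree [K [C [f [HK [HC [Hqi _]]]]]]]]]]]]].
  pose proof (tree_connected Htree) as Hcon.
  set (phi := fun x => round_point src (f x)).
  assert (Hupper : forall a b, INR (gdist src tgt (phi a) (phi b)) <= K * d a b + (C + 2)).
  { intros a b. destruct (tdist_round_point Hcon (f a) (f b)), (Hqi a b).
    unfold phi; lra. }
  assert (Hlower : forall a b, d a b <= K * (INR (gdist src tgt (phi a) (phi b)) + (C + 2))).
  { intros a b. destruct (tdist_round_point Hcon (f a) (f b)), (Hqi a b).
    replace (d a b) with (K * (1 / K * d a b)) by (field; lra).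
    apply Rmult_le_compat_l; unfold phi; lra. }
  eexists; split; [|exact (bottleneck_of_coarse_embedding Hm Htree (K := K) (C := C + 2) ltac:(lra)
                             Hupper Hlower)].
  pose proof (pos_INR (2 * floor_nat (K + (C + 2)))).
  pose proof (pos_INR (2 * floor_nat (K + (C + 2)) + 1)).
  apply Rplus_le_le_0_compat; apply Rmult_le_pos; lra.
Qed.

Section ParentTree.
Variables (V : Type) (level : V -> nat) (parent : V -> V).
Hypothesis level_parent : forall w, (0 < level w)%nat -> level (parent w) = (level w - 1)%nat.

Definition parent_edge : Type := { w : V | (0 < level w)%nat }.
Definition edge_child (e : parent_edge) : V := proj1_sig e.
Definition edge_parent (e : parent_edge) : V := parent (proj1_sig e).

Notation adj := (adj edge_child edge_parent).
Notation walk := (walk edge_child edge_parent).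
Notation vpath := (vpath edge_child edge_parent).

Lemma adj_parent_iff a b :
  adj a b <-> ((0 < level a)%nat /\ b = parent a) \/ ((0 < level b)%nat /\ a = parent b).
Proof.
  split.
  - intros [[w Hw] [[<- <-]|[<- <-]]]; auto.
  - intros [[Ha ->]|[Hb ->]]; [exists (exist _ a Ha); left | exists (exist _ b Hb); right]; auto.
Qed.

Definition ancestor (k : nat) (w : V) : V := Nat.iter (level w - k) parent w.

Lemma level_ancestor k w : (k <= level w)%nat -> level (ancestor k w) = k.
Proof.
  unfold ancestor. remember (level w - k)%nat as n eqn:Hn. revert w Hn.
  induction n as [|n IH]; intros w Hn Hk; [simpl; lia|].
  rewrite Nat.iter_succ_r. apply IH; rewrite level_parent; lia.
Qed.

Lemma ancestor_level w : ancestor (level w) w = w.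
Proof. unfold ancestor. rewrite Nat.sub_diag. reflexivity. Qed.

Lemma ancestor_parent k w : (k < level w)%nat -> ancestor k (parent w) = ancestor k w.
Proof.
  intros Hk. unfold ancestor. rewrite level_parent by lia.
  replace (level w - k)%nat with (S (level w - 1 - k)) by lia.
  rewrite Nat.iter_succ_r. reflexivity.
Qed.

Lemma ancestor_ancestor k j w : (k <= j)%nat -> (j <= level w)%nat ->
  ancestor k (ancestor j w) = ancestor k w.
Proof.
  intros Hkj Hj. unfold ancestor at 1. rewrite level_ancestor by assumption. unfold ancestor.
  rewrite <- Nat.iter_add. f_equal. lia.
Qed.

Lemma walk_common_ancestor u v n : walk u v n ->
  exists k, (k <= level u)%nat /\ (k <= level v)%nat /\ ancestor k u = ancestor k v /\
            (level u + level v <= n + 2 * k)%nat.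
Proof.
  induction 1 as [v|u u' v n Huu' _ [k [Hku' [Hkv [Hanc Hlen]]]]].
  - exists (level v); repeat split; lia.
  - apply adj_parent_iff in Huu' as [[Hu ->]|[Hu' ->]].
    + rewrite level_parent in * by assumption.
      exists k; repeat split; try lia. rewrite <- Hanc. symmetry. apply ancestor_parent. lia.
    + pose proof (level_parent Hu').
      destruct (Nat.eq_dec k (level u')) as [->|Hk].
      * exists (level (parent u')). repeat split; try lia.
        rewrite ancestor_level in Hanc. rewrite ancestor_level.
        rewrite <- (@ancestor_ancestor (level (parent u')) (level u') v), <- Hanc by lia.
        rewrite <- ancestor_parent, ancestor_level by lia. reflexivity.
      * exists k. repeat split; try lia. rewrite ancestor_parent by lia. assumption.
Qed.

Lemma walk_to_ancestor k u : (k <= level u)%nat -> walk u (ancestor k u) (level u - k).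
Proof.
  remember (level u - k)%nat as n eqn:Hn. revert u Hn.
  induction n as [|n IH]; intros u Hn Hk.
  - unfold ancestor. rewrite <- Hn. constructor.
  - apply walk_cons with (parent u); [apply adj_parent_iff; left; split; [lia | reflexivity]|].
    rewrite <- (@ancestor_parent k u) by lia. apply IH; rewrite level_parent; lia.
Qed.

Lemma walk_via_ancestor k u v : (k <= level u)%nat -> (k <= level v)%nat ->
  ancestor k u = ancestor k v -> walk u v ((level u - k) + (level v - k)).
Proof.
  intros Hku Hkv Hanc. apply walk_app with (ancestor k u); [apply walk_to_ancestor; assumption|].
  rewrite Hanc. apply walk_sym, walk_to_ancestor; assumption.
Qed.

Definition descendant (c w : V) : Prop := (level c <= level w)%nat /\ ancestor (level c) w = c.

Lemma descendant_refl c : descendant c c.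
Proof. split; [lia | apply ancestor_level]. Qed.

Lemma descendant_exit c w w' : adj w w' -> descendant c w -> ~ descendant c w' -> w' = parent c.
Proof.
  intros Hww' [Hlc Hanc] Hout. apply adj_parent_iff in Hww' as [[Hw ->]|[Hw' ->]].
  - destruct (Nat.eq_dec (level c) (level w)) as [Heq|Hne].
    + rewrite Heq, ancestor_level in Hanc. subst; reflexivity.
    + exfalso; apply Hout. split; [rewrite level_parent; lia|].
      rewrite ancestor_parent by lia. assumption.
  - exfalso. apply Hout. pose proof (level_parent Hw').
    split; [lia|]. rewrite <- ancestor_parent by lia. assumption.
Qed.

Lemma vpath_descendant_iff c x y l : vpath x y l -> ~ In (parent c) l ->
  (descendant c x <-> descendant c y).
Proof.
  induction 1 as [v|u v w l Huv Hl IH]; intros Hout; [tauto|].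
  rewrite <- IH by (intros Hin; apply Hout; right; assumption).
  split; intros Hdesc; apply NNPP; intros Hndesc; apply Hout.
  - right. rewrite <- (descendant_exit Huv Hdesc Hndesc). apply (vpath_head_in Hl).
  - left. apply (descendant_exit (adj_sym Huv) Hdesc Hndesc).
Qed.

Lemma vpath_descendant c v l : vpath c v l -> ~ In (parent c) l -> descendant c v.
Proof. intros Hl Hout. apply (vpath_descendant_iff Hl Hout), descendant_refl. Qed.

(* Both [parent u] and [v] would lie below [c], although [parent u] is two levels closer to the
   root than [c]. *)
Lemma no_climb_to_descendant u c v l : (0 < level u)%nat -> (0 < level c)%nat ->
  u = parent c -> descendant c v -> vpath (parent u) v l -> ~ In u l -> False.
Proof.
  intros Hu Hc Hcu Hv Hl Hout. rewrite Hcu in Hout.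
  apply (vpath_descendant_iff Hl Hout) in Hv as [Hlev _].
  pose proof (level_parent Hu). pose proof (level_parent Hc). subst u. lia.
Qed.

Lemma simple_vpath_unique u v l1 l2 : vpath u v l1 -> NoDup l1 ->
  vpath u v l2 -> NoDup l2 -> l1 = l2.
Proof.
  intros H1. revert l2. induction H1 as [v|u u1 v l1 Hu1 Hl1 IH]; intros l2 Hnd1 H2 Hnd2.
  - inversion H2 as [|a u2 c l2' _ Hl2]; subst; [reflexivity|].
    inversion Hnd2 as [|? ? Hout2 _]; subst. exfalso; exact (Hout2 (vpath_last_in Hl2)).
  - inversion H2 as [|a u2 c l2' Hu2 Hl2]; subst.
    + inversion Hnd1 as [|? ? Hout1 _]; subst. exfalso; exact (Hout1 (vpath_last_in Hl1)).
    + inversion Hnd1 as [|a b Hout1 Hnd1']; inversion Hnd2 as [|a' b' Hout2 Hnd2']; subst.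
      destruct (classic (u1 = u2)) as [<-|Hne]; [f_equal; auto|exfalso].
      apply adj_parent_iff in Hu1 as [[Hu ->]|[Hu1 Hp1]], Hu2 as [[Hu' Hq2]|[Hu2 Hp2]].
      * congruence.
      * rewrite Hp2 in Hout2.
        exact (no_climb_to_descendant Hu Hu2 Hp2 (vpath_descendant Hl2 Hout2) Hl1 Hout1).
      * rewrite Hq2 in Hl2. rewrite Hp1 in Hout1.
        exact (no_climb_to_descendant Hu' Hu1 Hp1 (vpath_descendant Hl1 Hout1) Hl2 Hout2).
      * rewrite Hp1 in Hout1. rewrite Hp2 in Hout2.
        destruct (vpath_descendant Hl1 Hout1) as [_ Hanc1].
        destruct (vpath_descendant Hl2 Hout2) as [_ Hanc2].
        assert (Hlev : level u1 = level u2).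
        { pose proof (level_parent Hu1). pose proof (level_parent Hu2).
          rewrite Hp1 in Hp2. rewrite Hp2 in *. lia. }
        apply Hne. rewrite <- Hanc1, <- Hanc2, Hlev. reflexivity.
Qed.

Hypothesis common_root : forall u v, ancestor 0 u = ancestor 0 v.

Lemma parent_tree : simplicial_tree edge_child edge_parent.
Proof.
  split; [split|split].
  - intros [w Hw] Hloop. unfold edge_child, edge_parent in Hloop; simpl in Hloop.
    pose proof (level_parent Hw). rewrite <- Hloop in *. lia.
  - intros [w Hw] [w' Hw']. unfold edge_child, edge_parent; simpl. intros [[-> _]|[Hww' Hw'w]].
    + f_equal. apply proof_irrelevance.
    + exfalso. pose proof (level_parent Hw). pose proof (level_parent Hw').
      rewrite <- Hww' in *. rewrite Hw'w in *. lia.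
  - intros u v. exists (level u - 0 + (level v - 0))%nat. apply walk_via_ancestor; auto; lia.
  - intros u v l1 l2 [Hhd1 [Hlast1 [Hnd1 Hch1]]] [Hhd2 [Hlast2 [Hnd2 Hch2]]].
    apply simple_vpath_unique with u v; try apply vpath_iff; auto.
Qed.

End ParentTree.

Section LevelTree.
Variables (X : Type) (d : X -> X -> R).
Hypotheses (Hm : is_metric d) (Hgeo : geodesic d).
Variable o : X.

Definition height (x : X) : R := d o x.

Definition ray (x : X) : R -> X := proj1_sig (constructive_indefinite_description _ (Hgeo o x)).

Lemma ray_segment x : geodesic_segment d (ray x) o x.
Proof. unfold ray. destruct (constructive_indefinite_description _ _) as [g Hg]. exact Hg. Qed.

Lemma height_ray x s : 0 <= s <= height x -> height (ray x s) = s /\ d (ray x s) x = height x - s.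
Proof. apply (geodesic_segment_dist (ray_segment x)). Qed.

Lemma ray_start x : ray x 0 = o.
Proof. apply (ray_segment x). Qed.

Lemma ray_end x : ray x (height x) = x.
Proof. apply (ray_segment x). Qed.

Lemma chained_ray x s (P : X -> Prop) : 0 <= s <= height x ->
  (forall u, s <= u <= height x -> P (ray x u)) -> chained d P (ray x s) x.
Proof.
  intros Hs HP. pose proof (chained_geodesic_segment (ray_segment x) (proj1 Hs) (proj2 Hs)
                              (Rle_refl _) HP) as Hch.
  rewrite ray_end in Hch. exact Hch.
Qed.

Lemma chained_base_ray x (P : X -> Prop) :
  (forall u, 0 <= u <= height x -> P (ray x u)) -> chained d P o x.
Proof.
  intros HP. rewrite <- (ray_start x).
  apply chained_ray; [split; [lra | apply (d_nonneg Hm)] | auto].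
Qed.

Definition level (x : X) : nat := floor_nat (height x).
Definition above (k : nat) (z : X) : Prop := INR k <= height z.

Lemma level_spec x : INR (level x) <= height x < INR (level x) + 1.
Proof. apply floor_nat_spec, (d_nonneg Hm). Qed.

Lemma above_level x : above (level x) x.
Proof. apply level_spec. Qed.

Lemma above_le k k' z : (k <= k')%nat -> above k' z -> above k z.
Proof. unfold above. intros Hk Hz. apply le_INR in Hk. lra. Qed.

Lemma chained_ray_above x k : (k <= level x)%nat -> chained d (above k) (ray x (INR k)) x.
Proof.
  intros Hk. pose proof (level_spec x) as Hx. apply le_INR in Hk. pose proof (pos_INR k).
  apply chained_ray; [lra|]. intros u Hu. unfold above.
  rewrite (proj1 (@height_ray x u ltac:(lra))). lra.
Qed.

Lemma level_ray x k : (k <= level x)%nat -> level (ray x (INR k)) = k.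
Proof.
  intros Hk. pose proof (level_spec x). apply le_INR in Hk. pose proof (pos_INR k).
  unfold level. rewrite (proj1 (@height_ray x (INR k) ltac:(lra))). apply floor_nat_INR.
Qed.

Definition same_piece (x y : X) : Prop := level x = level y /\ chained d (above (level x)) x y.

Lemma same_piece_refl x : same_piece x x.
Proof. split; [reflexivity | constructor; apply above_level]. Qed.

Lemma same_piece_sym x y : same_piece x y -> same_piece y x.
Proof. intros [Hl Hch]; split; [congruence | rewrite <- Hl; apply (chained_sym Hm Hch)]. Qed.

Lemma same_piece_trans x y z : same_piece x y -> same_piece y z -> same_piece x z.
Proof.
  intros [Hl1 Hch1] [Hl2 Hch2]; split; [congruence|].
  apply (chained_trans Hch1). rewrite Hl1. exact Hch2.
Qed.

Definition representative (x : X) : X := epsilon (inhabits x) (same_piece x).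

Lemma representative_spec x : same_piece x (representative x).
Proof. unfold representative. apply epsilon_spec. exists x. apply same_piece_refl. Qed.

Lemma representative_eq x y : same_piece x y -> representative x = representative y.
Proof.
  intros Hxy. unfold representative.
  replace (same_piece x) with (same_piece y).
  - apply epsilon_inh_irrelevance. exists y. apply same_piece_refl.
  - apply functional_extensionality; intros z. apply propositional_extensionality.
    split; intros Hz; eauto using same_piece_trans, same_piece_sym.
Qed.

Lemma representative_idem x : representative (representative x) = representative x.
Proof. apply representative_eq, same_piece_sym, representative_spec. Qed.

Definition piece : Type := { x : X | representative x = x }.

Definition piece_of (x : X) : piece := exist _ (representative x) (representative_idem x).

Lemma piece_of_eq x y : same_piece x y -> piece_of x = piece_of y.
Proof. intros Hxy. apply subset_eq_compat, representative_eq, Hxy. Qed.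

Lemma same_piece_of_eq x y : piece_of x = piece_of y -> same_piece x y.
Proof.
  intros Hxy. injection Hxy as Hxy.
  apply same_piece_trans with (representative x); [apply representative_spec|].
  rewrite Hxy. apply same_piece_sym, representative_spec.
Qed.

Lemma piece_of_val v : piece_of (proj1_sig v) = v.
Proof. destruct v as [x Hx]. apply subset_eq_compat, Hx. Qed.

Definition piece_level (v : piece) : nat := level (proj1_sig v).

Lemma piece_level_of x : piece_level (piece_of x) = level x.
Proof. symmetry. apply (representative_spec x). Qed.

Definition foot (x : X) : X := ray x (INR (level x) - 1).

Lemma foot_spec x : (0 < level x)%nat ->
  level (foot x) = (level x - 1)%nat /\ chained d (above (level x - 1)) (foot x) x.
Proof.
  intros Hx. unfold foot.
  replace (INR (level x) - 1) with (INR (level x - 1)) by (rewrite minus_INR by lia; simpl; lra).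
  split; [apply level_ray | apply chained_ray_above]; lia.
Qed.

Definition piece_parent (v : piece) : piece :=
  match piece_level v with O => v | S _ => piece_of (foot (proj1_sig v)) end.

Lemma piece_parent_pos v : (0 < piece_level v)%nat ->
  piece_parent v = piece_of (foot (proj1_sig v)).
Proof. unfold piece_parent. destruct (piece_level v); [lia | reflexivity]. Qed.

Lemma piece_level_parent v : (0 < piece_level v)%nat ->
  piece_level (piece_parent v) = (piece_level v - 1)%nat.
Proof. intros Hv. rewrite piece_parent_pos, piece_level_of by assumption. apply foot_spec, Hv. Qed.

Notation pancestor := (ancestor piece_level piece_parent).

Lemma ancestor_piece_of x k z : (k <= level x)%nat -> level z = k ->
  chained d (above k) z x -> pancestor k (piece_of x) = piece_of z.
Proof.
  remember (level x - k)%nat as n eqn:Hn. revert x Hn.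
  induction n as [|n IH]; intros x Hn Hk Hz Hzx.
  - replace k with (piece_level (piece_of x)) by (rewrite piece_level_of; lia).
    rewrite ancestor_level. apply piece_of_eq.
    split; [lia|]. replace (level x) with k by lia. apply (chained_sym Hm Hzx).
  - set (r := representative x).
    destruct (representative_spec x) as [Hlr Hxr]. fold r in Hlr, Hxr.
    destruct (@foot_spec r ltac:(lia)) as [Hlf Hfr].
    rewrite <- (ancestor_parent piece_level_parent) by (rewrite piece_level_of; lia).
    rewrite piece_parent_pos by (rewrite piece_level_of; lia).
    change (proj1_sig (piece_of x)) with r.
    apply IH; [lia | lia | assumption|].
    apply (chained_trans Hzx), (chained_trans (y := r)).
    + apply (chained_mono (P := above (level x))); [intros w; apply above_le; lia | exact Hxr].
    + apply (chained_sym Hm), (chained_mono (P := above (level r - 1))); [|exact Hfr].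
      intros w; apply above_le; lia.
Qed.

Lemma ancestor_piece_of_ray x k : (k <= level x)%nat ->
  pancestor k (piece_of x) = piece_of (ray x (INR k)).
Proof.
  intros Hk.
  apply ancestor_piece_of; [assumption | apply level_ray, Hk | apply chained_ray_above, Hk].
Qed.

Lemma piece_common_root u v : pancestor 0 u = pancestor 0 v.
Proof.
  rewrite <- (piece_of_val u), <- (piece_of_val v), !ancestor_piece_of_ray by lia.
  simpl. rewrite !ray_start. reflexivity.
Qed.

Definition piece_edge : Type := parent_edge piece_level.
Notation psrc := (@edge_child piece piece_level).
Notation ptgt := (@edge_parent piece piece_level piece_parent).
Notation pdist := (gdist psrc ptgt).

Lemma piece_tree : simplicial_tree psrc ptgt.
Proof. apply parent_tree; [apply piece_level_parent | apply piece_common_root]. Qed.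

Lemma pdist_le_of_chained x y k : (k <= level x)%nat -> (k <= level y)%nat ->
  chained d (above k) x y -> (pdist (piece_of x) (piece_of y) <= (level x - k) + (level y - k))%nat.
Proof.
  intros Hkx Hky Hxy. apply (gdist_min (tree_connected piece_tree)).
  rewrite <- (piece_level_of x), <- (piece_level_of y).
  apply walk_via_ancestor; [apply piece_level_parent | rewrite piece_level_of; assumption
                            | rewrite piece_level_of; assumption|].
  rewrite (ancestor_piece_of_ray Hkx). symmetry.
  apply ancestor_piece_of; [assumption | apply level_ray, Hkx|].
  apply (chained_trans (chained_ray_above Hkx) Hxy).
Qed.

Lemma chained_of_pdist x y : exists k, (k <= level x)%nat /\ (k <= level y)%nat /\
  chained d (above k) x y /\ (level x + level y <= pdist (piece_of x) (piece_of y) + 2 * k)%nat.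
Proof.
  destruct (walk_common_ancestor piece_level_parent (gdist_walk (tree_connected piece_tree)
              (piece_of x) (piece_of y))) as [k [Hkx [Hky [Hanc Hlen]]]].
  rewrite !piece_level_of in *. exists k; repeat split; try assumption.
  rewrite !ancestor_piece_of_ray in Hanc by assumption.
  destruct (same_piece_of_eq Hanc) as [_ Hrays]. rewrite level_ray in Hrays by assumption.
  apply (chained_trans (chained_sym Hm (chained_ray_above Hkx))), (chained_trans Hrays).
  apply chained_ray_above, Hky.
Qed.

Lemma pdist_le_dist x y : INR (pdist (piece_of x) (piece_of y)) <= d x y + 2.
Proof.
  destruct (Hgeo x y) as [g Hg]. change (geodesic_segment d g x y) in Hg.
  pose proof (level_spec x). pose proof (level_spec y).
  pose proof (d_nonneg Hm o x). pose proof (d_nonneg Hm o y).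
  pose proof (d_triangle Hm o x y). pose proof (d_triangle Hm o y x). rewrite (d_sym Hm y x) in *.
  (* [G] is the Gromov product (x|y)_o, clamped at 0. *)
  set (G := Rmax 0 ((height x + height y - d x y) / 2)).
  assert (Hseg : forall s, 0 <= s <= d x y -> G <= height (g s)).
  { intros s Hs. destruct (geodesic_segment_dist Hg Hs) as [Hxs Hsy].
    pose proof (d_triangle Hm o (g s) x). pose proof (d_triangle Hm o (g s) y).
    rewrite (d_sym Hm (g s) x) in *. unfold G, height in *.
    apply Rmax_lub; [apply (d_nonneg Hm) | lra]. }
  assert (HGx : G <= height x) by (apply Rmax_lub; unfold height in *; lra).
  assert (HGy : G <= height y) by (apply Rmax_lub; unfold height in *; lra).
  set (k := floor_nat G).
  destruct (floor_nat_spec (Rmax_l 0 _ : 0 <= G)) as [HkG HGk]. fold k in HkG, HGk.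
  assert (Hkx : (k <= level x)%nat) by (apply floor_nat_ge; lra).
  assert (Hky : (k <= level y)%nat) by (apply floor_nat_ge; lra).
  assert (Hxy : chained d (above k) x y).
  { apply (chained_along_segment Hm Hg). intros s Hs. pose proof (Hseg s Hs). unfold above. lra. }
  pose proof (le_INR _ _ (pdist_le_of_chained Hkx Hky Hxy)) as Hle.
  rewrite plus_INR, !minus_INR in Hle by assumption.
  assert (HGmax : (height x + height y - d x y) / 2 <= G) by apply Rmax_r.
  unfold height in *. lra.
Qed.

Variable D : R.
Hypotheses (HD : 0 <= D) (Hbn : bottleneck d D).

Lemma dist_le_of_chained_above x y k : (k <= level x)%nat -> (k <= level y)%nat ->
  chained d (above k) x y -> d x y <= height x + height y - 2 * INR k + 4 * D + 2.
Proof.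
  intros Hkx Hky Hxy. apply le_INR in Hkx, Hky.
  pose proof (level_spec x). pose proof (level_spec y).
  pose proof (d_triangle Hm x o y). rewrite (d_sym Hm x o) in *. unfold height in *.
  destruct (Rlt_or_le (INR k) (D + 1)) as [Hk|Hk]; [lra|].
  (* Apply the bottleneck property to the ray from o to x at height t0 and to the chain from o
     to x that follows the ray to y and then the chain from y to x.  The point it provides is
     too low to lie above k, so it lies on the ray to y, which ties x to y. *)
  set (t0 := INR k - (D + 1)).
  set (P := fun c => (exists u, 0 <= u <= height y /\ c = ray y u) \/ above k c).
  assert (HP : chained d P o x).
  { apply (chained_trans (y := y)).
    - apply chained_base_ray. intros u Hu. left. exists u. auto.
    - apply (chained_mono (P := above k)); [intros c Hc; right; exact Hc|].
      apply (chained_sym Hm Hxy). }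
  assert (Ht0 : 0 <= t0 <= height x) by (unfold t0, height; lra).
  destruct (Hbn (ray_segment x) Ht0 HP) as [c [Hc Hct0]].
  destruct (height_ray Ht0) as [Hht0 Hdt0].
  pose proof (d_triangle Hm o c (ray x t0)). pose proof (d_triangle Hm o (ray x t0) c).
  rewrite (d_sym Hm (ray x t0) c) in *. unfold height in *.
  destruct Hc as [[u [Hu ->]]|Habove].
  - destruct (height_ray Hu) as [Hhu Hdu].
    pose proof (d_triangle Hm x (ray x t0) y). pose proof (d_triangle Hm (ray x t0) (ray y u) y).
    rewrite (d_sym Hm x (ray x t0)), (d_sym Hm (ray x t0) (ray y u)) in *.
    unfold height, t0 in *. lra.
  - unfold above, height, t0 in *. lra.
Qed.

Lemma dist_le_pdist x y : d x y <= INR (pdist (piece_of x) (piece_of y)) + 4 * D + 4.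
Proof.
  destruct (chained_of_pdist x y) as [k [Hkx [Hky [Hxy Hlen]]]].
  pose proof (dist_le_of_chained_above Hkx Hky Hxy).
  pose proof (level_spec x). pose proof (level_spec y).
  apply le_INR in Hlen. rewrite !plus_INR, mult_INR in Hlen. simpl in Hlen. lra.
Qed.

Definition piece_point (x : X) : tpoint piece piece_edge :=
  exist (@valid_point piece piece_edge) (PV piece_edge (piece_of x)) I.

Lemma tdist_piece_point a b :
  tdist psrc ptgt (piece_point a) (piece_point b) = INR (pdist (piece_of a) (piece_of b)).
Proof.
  unfold tdist, piece_point; simpl. unfold list_min; simpl. rewrite graph_dist_gdist. ring.
Qed.

Lemma piece_point_dense p : exists x, tdist psrc ptgt (piece_point x) p <= 1.
Proof.
  pose proof (tree_connected piece_tree) as Hcon.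
  destruct p as [[v|e t] Hp].
  - exists (proj1_sig v). unfold tdist, piece_point; simpl. unfold list_min; simpl.
    rewrite graph_dist_gdist, piece_of_val, (gdist_refl Hcon). simpl. lra.
  - exists (proj1_sig (psrc e)). unfold tdist, piece_point; simpl.
    rewrite piece_of_val, !graph_dist_gdist, (gdist_refl Hcon). simpl in Hp |- *.
    eapply Rle_trans; [apply Rmin_l | lra].
Qed.

Lemma piece_of_close x y : level x = level y -> d x y <= 1 -> piece_of x = piece_of y.
Proof.
  intros Hl Hxy. apply piece_of_eq. split; [assumption|].
  apply chained_close; [apply above_level | rewrite Hl; apply above_level | assumption].
Qed.

Hypothesis Hproper : proper d.

(* The children of a piece of level n - 1 are pieces of level n, whose points lie in the
   ball of radius n + 1 about o; a finite 1/2-net of that ball meets each of them. *)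
Lemma piece_tree_locally_finite : locally_finite psrc ptgt.
Proof.
  intros v. set (n := S (piece_level v)).
  destruct (proper_half_net Hm Hproper o (INR n + 1)) as [net Hnet].
  set (pick := fun z => piece_of (epsilon (inhabits z) (fun y => level y = n /\ d z y < / 2))).
  exists (piece_parent v :: map pick net).
  intros u [[w Hw] [[Hv Hu]|[Hu Hv]]]; unfold edge_child, edge_parent in Hu, Hv; simpl in Hu, Hv.
  - left. subst. reflexivity.
  - right. subst w. set (y := proj1_sig u).
    assert (Hly : level y = n).
    { pose proof (piece_level_parent Hw) as Hpl. rewrite Hv in Hpl.
      unfold n, y, piece_level in *. lia. }
    assert (Hball : d o y <= INR n + 1).
    { pose proof (level_spec y). rewrite Hly in *. unfold height in *. lra. }
    destruct (Hnet y Hball) as [z [Hz Hzy]].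
    apply in_map_iff. exists z; split; [|assumption].
    destruct (epsilon_spec (inhabits z) (fun y => level y = n /\ d z y < / 2)
                (ex_intro _ y (conj Hly Hzy))) as [Hlc Hzc].
    set (c := epsilon (inhabits z) _) in Hlc, Hzc.
    change (pick z) with (piece_of c). rewrite <- (piece_of_val u). fold y.
    apply piece_of_close; [congruence|].
    pose proof (d_triangle Hm c z y). rewrite (d_sym Hm c z) in *. lra.
Qed.

End LevelTree.

Definition one_C_quasi_isometric_to_locally_finite_tree (X : Type) (d : X -> X -> R) : Prop :=
  exists (V E : Type) (src tgt : E -> V),
    simplicial_tree src tgt /\ locally_finite src tgt /\
    exists (C : R) (f : X -> tpoint V E), 0 <= C /\ one_C_quasi_isometry d (tdist src tgt) C f.

Lemma level_tree_one_C_quasi_isometric (X : Type) (d : X -> X -> R) (D : R) :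
  is_metric d -> geodesic d -> proper d -> 0 <= D -> bottleneck d D -> X ->
  one_C_quasi_isometric_to_locally_finite_tree d.
Proof.
  intros Hm Hgeo Hproper HD Hbn o.
  exists (piece d o), (piece_edge d o), (@edge_child _ (@piece_level _ d o)),
    (@edge_parent _ (@piece_level _ d o) (piece_parent Hm Hgeo (o := o))).
  split; [apply piece_tree | split; [apply (piece_tree_locally_finite Hm Hgeo Hproper)|]].
  exists (4 * D + 4), (piece_point Hm o). split; [lra | split].
  - intros a b. rewrite tdist_piece_point.
    pose proof (pdist_le_dist Hm Hgeo o a b). pose proof (dist_le_pdist Hm Hgeo o HD Hbn a b). lra.
  - intros p. destruct (piece_point_dense Hm Hgeo p) as [x Hx]. exists x.
    eapply Rle_trans; [exact Hx | lra].
Qed.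

Lemma empty_one_C_quasi_isometric (X : Type) (d : X -> X -> R) :
  ~ inhabited X -> one_C_quasi_isometric_to_locally_finite_tree d.
Proof.
  intros Hempty. exists Empty_set, Empty_set, (fun e => e), (fun e => e).
  split; [repeat split; intros []|]. split; [intros []|].
  exists 0, (fun x => False_rect _ (Hempty (inhabits x))). split; [lra | split].
  - intros a. destruct (Hempty (inhabits a)).
  - intros [[[]|[]] _].
Qed.

Theorem corollary4p26 (X : Type) (d : X -> X -> R) :
  quasi_tree d -> proper d ->
  exists (V E : Type) (src tgt : E -> V),
    @simplicial_tree V E src tgt /\ @locally_finite V E src tgt /\
    exists (C : R) (f : X -> tpoint V E),
      0 <= C /\ one_C_quasi_isometry d (@tdist V E src tgt) C f.
Proof.
  intros Hqt Hproper.
  destruct (quasi_tree_bottleneck Hqt) as [D [HD Hbn]].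
  destruct Hqt as [Hm [Hgeo _]].
  destruct (classic (inhabited X)) as [[o]|Hempty].
  - exact (level_tree_one_C_quasi_isometric Hm Hgeo Hproper HD Hbn o).
  - exact (empty_one_C_quasi_isometric d Hempty).
Qed.
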